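(* Let $G$ be a finitely generated group. Suppose there exist constants $\alpha,\beta>0$ such that every finite symmetric generating set $U$ of $G$ satisfies $|U^n|\geqslant(\alpha|U|)^{\beta n}$ for every $n\in\mathbb{N}$. Then either $G$ is finite with $|G|\leqslant1/\alpha$, or $G$ has uniform exponential growth.
   Context: For a finite generating set $S$, $B_S(n)$ is the ball of radius $n$ about the identity in the word metric of $S$, $\omega(G,S)=\lim_{n\to\infty}|B_S(n)|^{1/n}$, and $\omega(G)=\inf_S\omega(G,S)$ over finite generating sets; $G$ has uniform exponential growth if $\omega(G)>1$. $U^n=\{u_1\cdots u_n:u_i\in U\}$. *)

From HB Require Import structures.
From mathcomp Require Import all_boot all_order all_algebra.
From mathcomp Require Import monoid finmap.
From mathcomp Require Import all_classical all_reals all_analysis.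
Set Implicit Arguments. Unset Strict Implicit. Unset Printing Implicit Defensive.
Import Order.TTheory GRing.Theory Num.Theory.

Local Open Scope fset_scope.

Section GroupGrowth.
Variable G : groupType.

Definition symmetrize (S : {fset G}) : {fset G} :=
  S `|` [fset (x^-1)%g | x in S].

Definition symmetric_set (U : {fset G}) : Prop :=
  forall u, u \in U -> (u^-1)%g \in U.

Fixpoint fset_pow (U : {fset G}) (n : nat) : {fset G} :=
  match n with
  | 0 => [fset 1%g]
  | n'.+1 => [fset (x * y)%g | x in fset_pow U n', y in U]
  end.

Definition ball (S : {fset G}) (n : nat) : {fset G} :=
  \big[fsetU/fset0]_(k < n.+1) fset_pow (symmetrize S) k.

Definition generates (S : {fset G}) : Prop :=
  forall g : G, exists n, g \in ball S n.

Definition finitely_generated : Prop := exists S : {fset G}, generates S.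

Variable R : realType.
Local Open Scope ring_scope.

Definition growth_rate (S : {fset G}) : R :=
  limn (fun n : nat => (#|` ball S n|%:R : R) `^ (n%:R)^-1).

Definition min_growth_rate : R :=
  inf [set growth_rate S | S in [set S : {fset G} | generates S]]%classic.

Definition uniform_exponential_growth : Prop := 1 < min_growth_rate.

End GroupGrowth.

(* If G is finite, take U = G itself: then U^n = U for every n, so the
   hypothesis bounds (alpha |G|)^(beta n) by |G| for all n, forcing
   alpha |G| <= 1.  If G is infinite and S generates G, the ball
   U = B_S(k) is a symmetric generating set with at least k + 1 elements;
   for k > 2 / alpha the hypothesis gives |B_S(n)| >= |U^(n/k)| >= 2^(beta n / 2k),
   hence omega(G, S) >= 2^(beta / 2k), a bound independent of S.  The limit
   defining omega(G, S) exists by Fekete's lemma, since n |-> ln |B_S(n)|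
   is subadditive. *)
From Pilot Require Import Defs.
From HB Require Import structures.
From mathcomp Require Import all_boot all_order all_algebra.
From mathcomp Require Import monoid finmap.
From mathcomp Require Import all_classical all_reals all_analysis.
From mathcomp Require Import ring lra zify.
Set Implicit Arguments. Unset Strict Implicit. Unset Printing Implicit Defensive.
Import Order.TTheory GRing.Theory Num.Theory.
Import numFieldNormedType.Exports.

Section ProductSets.
Local Open Scope fset_scope.
Variable G : groupType.
Implicit Types A B C D S U V : {fset G}.

Definition mulfset A B : {fset G} := [fset (x * y)%g | x in A, y in B].

Lemma mulfsetP A B x :
  reflect (exists a, exists2 b, (a \in A) /\ (b \in B) & x = (a * b)%g)
          (x \in mulfset A B).
Proof.
apply: (iffP (imfset2P _ _ _ _ _)).
  by move=> [a aA [b bB ->]]; exists a, b.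
by move=> [a [b [aA bB] ->]]; exists a => //; exists b.
Qed.

Lemma mem_mulfset A B a b : a \in A -> b \in B -> (a * b)%g \in mulfset A B.
Proof. by move=> aA bB; apply/mulfsetP; exists a, b. Qed.

Lemma card_mulfset A B : (#|` mulfset A B| <= #|` A| * #|` B|)%N.
Proof.
rewrite /mulfset unlock /= size_seq_fset (leq_trans (size_undup _)) //.
rewrite size_allpairs_dep /=; elim: (enum_fset A) => [|a s IH] //=.
by rewrite mulSn leq_add2l.
Qed.

Lemma mulfsetA A B C : mulfset (mulfset A B) C = mulfset A (mulfset B C).
Proof.
apply/fsetP => x; apply/mulfsetP/mulfsetP.
  move=> [y [c [/mulfsetP [a [b [aA bB] ->]] cC] ->]].
  by exists a, (b * c)%g; [split=> //; apply: mem_mulfset | rewrite mulgA].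
move=> [a [y [aA /mulfsetP [b [c [bB cC] ->]]] ->]].
by exists (a * b)%g, c; [split=> //; apply: mem_mulfset | rewrite mulgA].
Qed.

Lemma mulfset1 A : mulfset A [fset 1%g] = A.
Proof.
apply/fsetP => x; apply/mulfsetP/idP.
  by move=> [a [b [aA]]]; rewrite in_fset1 => /eqP -> ->; rewrite mulg1.
by move=> xA; exists x, 1%g; rewrite ?mulg1 ?in_fset1.
Qed.

Lemma mul1fset A : mulfset [fset 1%g] A = A.
Proof.
apply/fsetP => x; apply/mulfsetP/idP.
  by move=> [a [b []]]; rewrite in_fset1 => /eqP -> bA ->; rewrite mul1g.
by move=> xA; exists 1%g, x; rewrite ?mul1g ?in_fset1.
Qed.

Lemma mulfsetS A B C D : A `<=` C -> B `<=` D -> mulfset A B `<=` mulfset C D.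
Proof.
move=> /fsubsetP AC /fsubsetP BD; apply/fsubsetP => x /mulfsetP [a [b [aA bB] ->]].
by apply: mem_mulfset; [apply: AC | apply: BD].
Qed.

Lemma fset_powS U n : fset_pow U n.+1 = mulfset (fset_pow U n) U.
Proof. by []. Qed.

Lemma fset_pow1 U : fset_pow U 1 = U.
Proof. by rewrite fset_powS mul1fset. Qed.

Lemma fset_powD U m n : fset_pow U (m + n) = mulfset (fset_pow U m) (fset_pow U n).
Proof.
elim: n => [|n IH]; first by rewrite addn0 mulfset1.
by rewrite addnS !fset_powS IH mulfsetA.
Qed.

Lemma fset_powSl U V n : U `<=` V -> fset_pow U n `<=` fset_pow V n.
Proof. by move=> UV; elim: n => [|n IH] //=; rewrite -!/(mulfset _ _) mulfsetS. Qed.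

Lemma fset_pow_symmetric U n : symmetric_set U -> symmetric_set (fset_pow U n).
Proof.
move=> symU; elim: n => [|n IH] x.
  by rewrite /= !in_fset1 => /eqP ->; rewrite invg1.
rewrite fset_powS => /mulfsetP [a [b [aA bB] ->]].
rewrite invgM -fset_powS -add1n fset_powD fset_pow1.
by apply: mem_mulfset; [apply: symU | apply: IH].
Qed.

Lemma symmetrize_symmetric S : symmetric_set (symmetrize S).
Proof.
move=> x; rewrite /symmetrize !in_fsetU => /orP [xS | /imfsetP [y yS ->]].
  by apply/orP; right; apply/imfsetP; exists x.
by rewrite invgK yS.
Qed.

End ProductSets.

Section Balls.
Local Open Scope fset_scope.
Variable G : groupType.
Implicit Types S : {fset G}.

Lemma ballP S n x :
  reflect (exists2 j, (j <= n)%N & x \in fset_pow (symmetrize S) j)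
          (x \in Defs.ball S n).
Proof.
apply: (iffP (bigfcupP _ _ _ _)).
  by move=> [j _ xj]; exists j => //; rewrite -ltnS ltn_ord.
by move=> [j jn xj]; exists (Ordinal (jn : j < n.+1)%N); rewrite ?mem_index_enum.
Qed.

Lemma ball1 S n : 1%g \in Defs.ball S n.
Proof. by apply/ballP; exists 0%N; rewrite ?in_fset1. Qed.

Lemma subset_ball S m n : (m <= n)%N -> Defs.ball S m `<=` Defs.ball S n.
Proof.
move=> mn; apply/fsubsetP => x /ballP [j jm xj]; apply/ballP; exists j => //.
exact: leq_trans mn.
Qed.

Lemma ball_symmetric S n : symmetric_set (Defs.ball S n).
Proof.
move=> x /ballP [j jn xj]; apply/ballP; exists j => //.
exact: fset_pow_symmetric (@symmetrize_symmetric _ S) _ xj.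
Qed.

Lemma fset_pow_ball S k n : fset_pow (Defs.ball S k) n `<=` Defs.ball S (k * n).
Proof.
elim: n => [|n IH].
  by apply/fsubsetP => x; rewrite in_fset1 => /eqP ->; apply: ball1.
apply/fsubsetP => x; rewrite fset_powS => /mulfsetP [y [u [/(fsubsetP IH) yB uB] ->]].
move: yB uB => /ballP [i ik yi] /ballP [j jk uj].
apply/ballP; exists (i + j)%N; first by rewrite mulnS addnC leq_add.
by rewrite fset_powD; apply: mem_mulfset.
Qed.

Lemma ballD S m n : Defs.ball S (m + n) `<=` mulfset (Defs.ball S m) (Defs.ball S n).
Proof.
apply/fsubsetP => x /ballP [j jmn]; rewrite -(subnKC (geq_minl j m)) fset_powD.
move=> /mulfsetP [a [b [aA bB] ->]]; apply: mem_mulfset; apply/ballP.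
  by exists (minn j m); rewrite ?geq_minr.
by exists (j - minn j m)%N => //; lia.
Qed.

Lemma card_ball_gt0 S n : (0 < #|` Defs.ball S n|)%N.
Proof. by rewrite cardfs_gt0; apply/fset0Pn; exists 1%g; apply: ball1. Qed.

Lemma card_ballD S m n :
  (#|` Defs.ball S (m + n)| <= #|` Defs.ball S m| * #|` Defs.ball S n|)%N.
Proof. exact: leq_trans (fsubset_leq_card (ballD S m n)) (card_mulfset _ _). Qed.

Lemma leq_card_ball S m n : (m <= n)%N -> (#|` Defs.ball S m| <= #|` Defs.ball S n|)%N.
Proof. by move=> mn; apply/fsubset_leq_card/subset_ball. Qed.

Lemma generates_ball S k : (0 < k)%N -> generates S -> generates (Defs.ball S k).
Proof.
move=> k_gt0 genS g; have [m /ballP [j jm gj]] := genS g; exists m; apply/ballP.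
exists j => //; apply: (fsubsetP (fset_powSl j _)) gj.
apply/fsubsetP => y yS; apply/fsetUP; left; apply/ballP.
by exists 1%N; rewrite ?fset_pow1.
Qed.

Lemma ball_stationary S k :
  Defs.ball S k.+1 `<=` Defs.ball S k -> forall m, Defs.ball S m `<=` Defs.ball S k.
Proof.
move=> stk; elim=> [|m IH]; first exact: subset_ball.
apply/fsubsetP => x /ballP [j]; rewrite leq_eqVlt => /orP [/eqP -> | jm] xj; last first.
  by apply: (fsubsetP IH); apply/ballP; exists j.
move: xj; rewrite fset_powS => /mulfsetP [y [u [ym uS] ->]].
have /(fsubsetP IH) /ballP [i ik yi] : y \in Defs.ball S m by apply/ballP; exists m.
apply: (fsubsetP stk); apply/ballP; exists i.+1 => //.
by rewrite fset_powS; apply: mem_mulfset.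
Qed.

Lemma card_ball_gt S k :
  generates S -> ~ (exists A : {fset G}, forall g : G, g \in A) ->
  (k < #|` Defs.ball S k|)%N.
Proof.
move=> genS infG; elim: k => [|k IH]; first exact: card_ball_gt0.
apply: (leq_ltn_trans IH); apply: fproper_ltn_card.
rewrite fproperE subset_ball //=; apply/negP => stk; apply: infG.
exists (Defs.ball S k) => g; have [m gm] := genS g.
exact: (fsubsetP (ball_stationary stk m)).
Qed.

End Balls.

Section Fekete.
Local Open Scope classical_set_scope.
Local Open Scope ring_scope.
Variable R : realType.
Variable a : nat -> R.
Hypothesis a_ge0 : forall n, 0 <= a n.
Hypothesis a_nondecreasing : {homo a : m n / (m <= n)%N >-> m <= n}.
Hypothesis a_subadditive : forall m n, a (m + n) <= a m + a n.

Lemma subadditive_mulSn j m : a (j.+1 * m) <= j.+1%:R * a m.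
Proof.
elim: j => [|j IH]; first by rewrite mul1n mul1r.
by rewrite mulSn mulrSr mulrDl mul1r addrC (le_trans (a_subadditive _ _)) ?lerD2l.
Qed.

(* Cut n into n %/ m + 1 blocks of length m. *)
Lemma fekete_bound m n : (0 < m)%N -> (0 < n)%N ->
  a n / n%:R <= a m / m%:R + a m / n%:R.
Proof.
move=> m_gt0 n_gt0; set q := (n %/ m)%N.
have an_le : a n <= q.+1%:R * a m.
  exact: le_trans (a_nondecreasing (ltnW (ltn_ceil n m_gt0))) (subadditive_mulSn _ _).
have qm_le : q.+1%:R * m%:R <= n%:R + m%:R :> R.
  by rewrite -natrM -natrD ler_nat mulSn addnC leq_add2r leq_divM.
have am0 := a_ge0 m.
have m0 : 0 < m%:R :> R by rewrite ltr0n.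
have n0 : 0 < n%:R :> R by rewrite ltr0n.
have -> : a n / n%:R = a n * m%:R / (m%:R * n%:R).
  by field; rewrite !gt_eqF.
have -> : a m / m%:R + a m / n%:R = a m * (n%:R + m%:R) / (m%:R * n%:R).
  by field; rewrite !gt_eqF.
by rewrite ler_pM2r ?invr_gt0 ?mulr_gt0 //; nra.
Qed.

Let averages := [set a n / n%:R | n in [set n | (0 < n)%N]].

Lemma fekete : (fun n => a n / n%:R) @ \oo --> inf averages.
Proof.
have has_inf_averages : has_inf averages.
  split; first by exists (a 1 / 1%:R), 1%N.
  by exists 0 => _ [n _ <-]; rewrite divr_ge0.
apply/cvgrPdist_lt => e e_gt0.
have e2_gt0 : 0 < e / 2 by rewrite divr_gt0.
have [_ [m m_gt0 <-] am_lt] := inf_adherent e2_gt0 has_inf_averages.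
exists (Num.truncn (2 * a m / e)).+1 => // n /= Nn.
have n_gt0 : (0 < n)%N by apply: leq_trans Nn.
have inf_le : inf averages <= a n / n%:R by apply: (ge_inf (proj2 has_inf_averages)); exists n.
have := fekete_bound m_gt0 n_gt0.
have n0 : 0 < n%:R :> R by rewrite ltr0n.
have : 2 * a m / e < n%:R by apply: lt_le_trans (truncnS_gt _) _; rewrite ler_nat.
rewrite ltr_pdivrMr // => Ne am_n.
have : a m / n%:R < e / 2 by rewrite ltr_pdivrMr //; nra.
by rewrite distrC ger0_norm ?subr_ge0 //; lra.
Qed.

End Fekete.

Local Open Scope ring_scope.

Lemma le1_of_powR_bounded (R : realType) (y C b : R) :
  0 < b -> (forall n : nat, y `^ (b * n%:R) <= C) -> y <= 1.
Proof.
move=> b_gt0 y_bounded; rewrite leNgt; apply/negP => y_gt1.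
have bly_gt0 : 0 < b * ln y by rewrite mulr_gt0 ?ln_gt0.
set n := (Num.truncn (C / (b * ln y))).+1.
have : C / (b * ln y) < n%:R by apply: truncnS_gt.
rewrite ltr_pdivrMr // => C_lt.
have := y_bounded n; rewrite /powR gt_eqF ?(lt_trans ltr01 y_gt1) //.
have := expR_ge1Dx (b * n%:R * ln y); lra.
Qed.

Lemma growth_rate_ge_expR (G : groupType) (R : realType) (S : {fset G}) (d : R) k :
  (forall n, (k <= n)%N -> d <= ln #|` Defs.ball S n|%:R / n%:R) ->
  expR d <= growth_rate R S.
Proof.
move=> d_le; set a := fun n => ln (#|` Defs.ball S n|%:R : R).
have card_gt0 n : 0 < #|` Defs.ball S n|%:R :> R by rewrite ltr0n card_ball_gt0.
have a_ge0 n : 0 <= a n by rewrite ln_ge0 // ler1n card_ball_gt0.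
have a_nondecreasing : {homo a : m n / (m <= n)%N >-> m <= n}.
  by move=> m n mn; rewrite ler_ln ?posrE // ler_nat leq_card_ball.
have a_subadditive m n : a (m + n) <= a m + a n.
  rewrite -lnM ?posrE // -natrM ler_ln ?posrE ?ltr0n ?muln_gt0 ?card_ball_gt0 //.
  by rewrite ler_nat card_ballD.
have a_cvg := fekete a_ge0 a_nondecreasing a_subadditive.
rewrite /growth_rate (_ : (fun n => _) = expR \o (fun n => a n / n%:R)); last first.
  by apply: funext => n /=; rewrite /powR pnatr_eq0 gtn_eqF ?card_ball_gt0 // mulrC.
set l := inf _ in a_cvg.
have exp_cvg : (expR \o (fun n => a n / n%:R) @ \oo --> expR l)%classic.
  exact: continuous_cvg (@continuous_expR R _) a_cvg.
rewrite (cvg_lim (@Rhausdorff R) exp_cvg) ler_expR -(cvg_lim (@Rhausdorff R) a_cvg).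
apply: limr_ge; first by apply/cvg_ex; exists l.
by exists k => // n /= kn; apply: d_le.
Qed.

Section PowerGrowthHypothesis.
Variables (G : groupType) (R : realType) (alpha beta : R).
Hypotheses (alpha_gt0 : 0 < alpha) (beta_gt0 : 0 < beta).
Hypothesis card_fset_pow_ge : forall U : {fset G}, symmetric_set U -> generates U ->
  forall n : nat, (alpha * #|` U|%:R) `^ (beta * n%:R) <= (#|` fset_pow U n|%:R : R).

Lemma card_full_fset_le (A : {fset G}) : (forall g, g \in A) -> #|` A|%:R <= alpha^-1.
Proof.
move=> fullA.
have genA : generates A.
  by move=> g; exists 1%N; apply/ballP; exists 1%N; rewrite // fset_pow1 in_fsetU fullA.
have symA : symmetric_set A by move=> u _.
have A_gt0 : 0 < #|` A|%:R :> R by rewrite ltr0n cardfs_gt0; apply/fset0Pn; exists 1%g.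
rewrite -(ler_pM2l alpha_gt0) mulfV ?gt_eqF //.
apply: (le1_of_powR_bounded (C := #|` A|%:R) beta_gt0) => n.
apply: le_trans (card_fset_pow_ge symA genA n) _.
by rewrite ler_nat; apply/fsubset_leq_card/fsubsetP => x.
Qed.

Lemma pow2_le_card_ball (S : {fset G}) k n :
  generates S -> (0 < k)%N -> 2 <= alpha * #|` Defs.ball S k|%:R ->
  2 `^ (beta * (n %/ k)%:R) <= #|` Defs.ball S n|%:R.
Proof.
move=> genS k_gt0 two_le; set q := (n %/ k)%N.
have powU := card_fset_pow_ge (@ball_symmetric _ S k) (generates_ball k_gt0 genS) q.
apply: le_trans (le_trans _ powU) _.
  by apply: ge0_ler_powR; rewrite ?nnegrE ?(le_trans _ two_le) // mulr_ge0 // ltW.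
rewrite ler_nat; apply/fsubset_leq_card/(fsubset_trans (fset_pow_ball S k q)).
by apply: subset_ball; rewrite mulnC leq_divM.
Qed.

Lemma ln_card_ball_ge (S : {fset G}) k n :
  ~ (exists A : {fset G}, forall g : G, g \in A) -> generates S ->
  2 <= alpha * k%:R -> (k <= n)%N ->
  beta * ln 2 / (2 * k%:R) <= ln #|` Defs.ball S n|%:R / n%:R.
Proof.
move=> infG genS two_le kn.
have k_gt0 : (0 < k)%N.
  by rewrite lt0n; apply: contraTneq two_le => ->; rewrite mulr0 -ltNge ltr0n.
have two_le_ball : 2 <= alpha * #|` Defs.ball S k|%:R.
  by apply: (le_trans two_le); rewrite ler_pM2l // ler_nat ltnW // card_ball_gt.
set q := (n %/ k)%N.
have q_gt0 : (0 < q)%N by rewrite divn_gt0.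
have n_le : (n <= 2 * k * q)%N by have := ltn_ceil n k_gt0; nia.
have card_gt0 : 0 < #|` Defs.ball S n|%:R :> R by rewrite ltr0n card_ball_gt0.
have ln_ge : beta * q%:R * ln 2 <= ln #|` Defs.ball S n|%:R.
  rewrite -ln_powR ler_ln ?posrE ?powR_gt0 //.
  exact: pow2_le_card_ball.
have n_gt0 : 0 < n%:R :> R by rewrite ltr0n (leq_trans k_gt0 kn).
have kR_gt0 : 0 < k%:R :> R by rewrite ltr0n.
have ln2_gt0 : 0 < ln 2 :> R by rewrite ln_gt0 ?ltr1n.
move: n_le; rewrite -(ler_nat R) !natrM => n_le.
rewrite ler_pdivlMr // mulrAC ler_pdivrMr ?mulr_gt0 //.
have := mulr_gt0 beta_gt0 ln2_gt0; nra.
Qed.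

End PowerGrowthHypothesis.

Theorem lemma2p6 (G : groupType) (R : realType) (alpha beta : R) :
  finitely_generated G ->
  0 < alpha -> 0 < beta ->
  (forall U : {fset G}, symmetric_set U -> generates U ->
     forall n : nat,
       (alpha * #|` U|%:R) `^ (beta * n%:R) <= (#|` fset_pow U n|%:R : R)) ->
  (exists A : {fset G}, (forall g : G, g \in A) /\ (#|` A|%:R : R) <= alpha^-1)
  \/ uniform_exponential_growth G R.
Proof.
move=> [S0 genS0] alpha_gt0 beta_gt0 powH.
have [[A fullA] | infG] := pselect (exists A : {fset G}, forall g, g \in A).
  by left; exists A; split=> //; apply: card_full_fset_le alpha_gt0 beta_gt0 powH _ fullA.
right; set k := (Num.truncn (2 / alpha)).+1.
have two_le : 2 <= alpha * k%:R.
  by rewrite mulrC -ler_pdivrMr // ltW // truncnS_gt.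
set d := beta * ln 2 / (2 * k%:R).
have d_gt0 : 0 < d by rewrite divr_gt0 ?mulr_gt0 ?ln_gt0 ?ltr1n ?ltr0n.
apply: (@lt_le_trans _ _ (expR d)); first by rewrite expR_gt1.
apply: lb_le_inf; first by exists (growth_rate R S0), S0.
move=> _ [S genS <-]; apply: (growth_rate_ge_expR (k := k)) => n kn.
exact (ln_card_ball_ge alpha_gt0 beta_gt0 powH infG genS two_le kn).
Qed.
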